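(* Let $\theta^1,\theta^2\in[0,\infty)^{s_0}$. Suppose the balance equation (B) holds for $\theta^1$, for $\theta^2$, and for $\theta^1-\frac{\theta^1\cdot\zeta_k}{\theta^2\cdot\zeta_k}\theta^2$ for every $k\in(\Gamma_{\theta^1}^+\cap\Gamma_{\theta^2}^-)\cup(\Gamma_{\theta^1}^-\cap\Gamma_{\theta^2}^+)$ (for such $k$ the coefficient $-\frac{\theta^1\cdot\zeta_k}{\theta^2\cdot\zeta_k}$ is positive). Then (B) holds for $c_1\theta^1+c_2\theta^2$ for all $c_1,c_2>0$.
   Context: Fix integers $s_0,r_0\ge 1$ and, for $k=1,\dots,r_0$, vectors $\nu_k,\nu_k'\in\mathbb{N}^{s_0}$ (reactant and product vectors of reaction $k$); set $\zeta_k=\nu_k'-\nu_k$. Fix $\alpha\in[0,\infty)^{s_0}$ and $\beta\in\mathbb{R}^{r_0}$ and set $\rho_k=\beta_k+\nu_k\cdot\alpha$. For $\theta\in[0,\infty)^{s_0}$ let $\Gamma_\theta^+=\{k:\theta\cdot\zeta_k>0\}$, $\Gamma_\theta^-=\{k:\theta\cdot\zeta_k<0\}$ and $\mathrm{supp}(\theta)=\{i:\theta_i>0\}$. A maximum over the empty set is $-\infty$. For $\theta\in[0,\infty)^{s_0}$ and $\gamma\in\mathbb{R}$: the balance equation for $\theta$ is (B) $\max_{k\in\Gamma_\theta^-}\rho_k=\max_{k\in\Gamma_\theta^+}\rho_k$; the time-scale constraint for $\theta$ at $\gamma$ is (T) $\gamma\le\max_{i:\theta_i>0}\alpha_i-\max_{k\in\Gamma_\theta^+\cup\Gamma_\theta^-}\rho_k$;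 Condition 3.2 holds for $\theta$ at $\gamma$ if (B) or (T) holds. *)

From HB Require Import structures.
From mathcomp Require Import all_boot all_order all_algebra.
Set Implicit Arguments. Unset Strict Implicit. Unset Printing Implicit Defensive.
Import Order.TTheory GRing.Theory Num.Theory.
Local Open Scope ring_scope.

(* max on R extended by -infinity (represented by None) *)
Definition omax (R : realDomainType) (x y : option R) : option R :=
  match x, y with
  | None, _ => y
  | _, None => x
  | Some a, Some b => Some (Num.max a b)
  end.

Definition maxover (R : realDomainType) (r0 : nat) (P : pred 'I_r0)
  (f : 'I_r0 -> R) : option R :=
  \big[@omax R/None]_(k | P k) Some (f k).

Definition zeta (s0 r0 : nat) (nu nu' : 'I_r0 -> 'I_s0 -> nat)
  (k : 'I_r0) (i : 'I_s0) : int := (nu' k i)%:Z - (nu k i)%:Z.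

Definition dotz (R : realDomainType) (s0 : nat) (theta : 'I_s0 -> R)
  (z : 'I_s0 -> int) : R := \sum_(i < s0) theta i * (z i)%:~R.

Definition rho (R : realDomainType) (s0 r0 : nat) (alpha : 'I_s0 -> R)
  (beta : 'I_r0 -> R) (nu : 'I_r0 -> 'I_s0 -> nat) (k : 'I_r0) : R :=
  beta k + \sum_(i < s0) (nu k i)%:R * alpha i.

Definition Gamma_plus (R : realDomainType) (s0 r0 : nat)
  (nu nu' : 'I_r0 -> 'I_s0 -> nat) (theta : 'I_s0 -> R) : pred 'I_r0 :=
  [pred k | 0 < dotz theta (zeta nu nu' k)].

Definition Gamma_minus (R : realDomainType) (s0 r0 : nat)
  (nu nu' : 'I_r0 -> 'I_s0 -> nat) (theta : 'I_s0 -> R) : pred 'I_r0 :=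
  [pred k | dotz theta (zeta nu nu' k) < 0].

Definition balance (R : realDomainType) (s0 r0 : nat) (alpha : 'I_s0 -> R)
  (beta : 'I_r0 -> R) (nu nu' : 'I_r0 -> 'I_s0 -> nat) (theta : 'I_s0 -> R)
  : Prop :=
  maxover (Gamma_minus nu nu' theta) (rho alpha beta nu)
  = maxover (Gamma_plus nu nu' theta) (rho alpha beta nu).

(* Write a_k = theta1.zeta_k and b_k = theta2.zeta_k.  The balance equation for
   c1 theta1 + c2 theta2 depends only on the signs of c1 a + c2 b, and a maximum
   over a union of index sets is the maximum of the two maxima.  Hence if no k has
   a_k and b_k of opposite signs, the positive (negative) coordinates of c1 a + c2 b
   are exactly those positive (negative) for a or for b, and balance transfers.
   Otherwise pick such a k: the ray m = |b_k| a + |a_k| b has vanishing k-th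
   coordinate, is balanced by hypothesis, and splits the cone spanned by a and b
   into two cones with strictly fewer sign-crossing coordinates; every balanced
   crossing ray of a subcone is a crossing ray of the whole cone, so induction on
   the number of crossings concludes. *)

From HB Require Import structures.
From mathcomp Require Import all_boot all_order all_algebra.
From mathcomp Require Import ring lra.
Set Implicit Arguments.
Unset Strict Implicit.
Unset Printing Implicit Defensive.
Import Order.TTheory GRing.Theory Num.Theory.
Local Open Scope ring_scope.

Section OptionMax.
Variable R : realDomainType.

Lemma omaxA : associative (@omax R).
Proof. by case=> [a|] [b|] [c|] //=; rewrite maxA. Qed.

Lemma omaxC : commutative (@omax R).
Proof. by case=> [a|] [b|] //=; rewrite maxC. Qed.

Lemma omaxNx : left_id None (@omax R).
Proof. by []. Qed.

HB.instance Definition _ :=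
  Monoid.isComLaw.Build (option R) None (@omax R) omaxA omaxC omaxNx.

Lemma maxoverU n (P Q : pred 'I_n) (f : 'I_n -> R) :
  maxover [predU P & Q] f = omax (maxover P f) (maxover Q f).
Proof.
rewrite /maxover big_mkcond (big_mkcond P) (big_mkcond Q) -big_split.
apply: eq_bigr => k _ /=.
by rewrite /in_mem /=; case: (P k); case: (Q k); rewrite /= ?maxxx.
Qed.

End OptionMax.

Section Opposite.
Variable R : realFieldType.
Implicit Types x y p q u v : R.

Definition opposite x y := (0 < x) && (y < 0) || (x < 0) && (0 < y).

Lemma oppositeC x y : opposite x y = opposite y x.
Proof. by rewrite /opposite orbC (andbC (x < 0)) (andbC (0 < x)). Qed.

Lemma oppositeN x y : opposite (- x) (- y) = opposite x y.
Proof. by rewrite /opposite !oppr_gt0 !oppr_lt0 orbC. Qed.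

Lemma pcomb_gt0 p q x y : 0 < p -> 0 < q -> ~~ opposite x y ->
  (0 < p * x + q * y) = (0 < x) || (0 < y).
Proof.
rewrite /opposite => p0 q0.
case: (ltrgtP x 0) => x0; case: (ltrgtP y 0) => y0 //= _;
  rewrite ?x0 ?y0 ?orbT ?orbF; first [nra | apply/negbTE; rewrite -leNgt; nra].
Qed.

Lemma pcomb_lt0 p q x y : 0 < p -> 0 < q -> ~~ opposite x y ->
  (p * x + q * y < 0) = (x < 0) || (y < 0).
Proof.
move=> p0 q0; rewrite -oppositeN => /(pcomb_gt0 p0 q0).
by rewrite !mulrN -opprD !oppr_gt0.
Qed.

Lemma opposite_combl u v x y : 0 < u -> 0 < v ->
  opposite x (u * x + v * y) -> opposite x y.
Proof.
rewrite /opposite => u0 v0 /orP[] /andP[x0 m0]; apply/orP; [left|right];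
  rewrite x0 /=; nra.
Qed.

Lemma opposite_norm_comb x y : opposite x y -> `|y| * x + `|x| * y = 0.
Proof.
rewrite /opposite => /orP[] /andP[x0 y0].
  by rewrite (gtr0_norm x0) (ltr0_norm y0); ring.
by rewrite (ltr0_norm x0) (gtr0_norm y0); ring.
Qed.

Lemma opposite_norm_gt0 x y : opposite x y -> 0 < `|x| /\ 0 < `|y|.
Proof.
by rewrite /opposite !normr_gt0 => /orP[] /andP[x0 y0];
  rewrite ?(gt_eqF x0) ?(lt_eqF x0) ?(gt_eqF y0) ?(lt_eqF y0).
Qed.

End Opposite.

Section Balanced.
Variables (R : realFieldType) (n : nat) (rho : 'I_n -> R).
Implicit Types (a b g f h : 'I_n -> R) (p q u v : R).

Definition balanced g :=
  maxover [pred k | g k < 0] rho = maxover [pred k | 0 < g k] rho.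

Lemma balanced_union g f h :
  (forall j, (0 < g j) = (0 < f j) || (0 < h j)) ->
  (forall j, (g j < 0) = (f j < 0) || (h j < 0)) ->
  balanced f -> balanced h -> balanced g.
Proof.
rewrite /balanced => pos neg Bf Bh.
have -> : maxover [pred k | g k < 0] rho
  = maxover [predU [pred k | f k < 0] & [pred k | h k < 0]] rho := eq_bigl _ _ neg.
have -> : maxover [pred k | 0 < g k] rho
  = maxover [predU [pred k | 0 < f k] & [pred k | 0 < h k]] rho := eq_bigl _ _ pos.
by rewrite !maxoverU Bf Bh.
Qed.

Lemma balanced_signs g f :
  (forall j, (0 < g j) = (0 < f j)) -> (forall j, (g j < 0) = (f j < 0)) ->
  balanced f -> balanced g.
Proof.
by move=> pos neg Bf; apply: (balanced_union _ _ Bf Bf) => j; rewrite orbb.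
Qed.

Lemma eq_balanced g f : g =1 f -> balanced f -> balanced g.
Proof. by move=> gf; apply: balanced_signs => j; rewrite gf. Qed.

Lemma balancedZ c g : 0 < c -> balanced g -> balanced (fun j => c * g j).
Proof.
by move=> c0; apply: balanced_signs => j; rewrite ?pmulr_rgt0 ?pmulr_rlt0.
Qed.

Lemma balanced_comb g f p q : 0 < p -> 0 < q ->
  (forall j, ~~ opposite (g j) (f j)) ->
  balanced g -> balanced f -> balanced (fun j => p * g j + q * f j).
Proof.
move=> p0 q0 no_opp; apply: balanced_union => j.
  by rewrite pcomb_gt0.
by rewrite pcomb_lt0.
Qed.

Definition crossings_balanced a b := forall k p q,
  opposite (a k) (b k) -> 0 < p -> 0 < q -> p * a k + q * b k = 0 ->
  balanced (fun j => p * a j + q * b j).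

Lemma crossings_balancedC a b :
  crossings_balanced a b -> crossings_balanced b a.
Proof.
move=> Hab k p q; rewrite oppositeC addrC => abk p0 q0 e.
by apply: eq_balanced (Hab k q p abk q0 p0 e) => j; rewrite addrC.
Qed.

Lemma crossings_balanced_combl a b u v : 0 < u -> 0 < v ->
  crossings_balanced a b -> crossings_balanced a (fun j => u * a j + v * b j).
Proof.
move=> u0 v0 Hab k p q /(opposite_combl u0 v0) abk p0 q0 e.
have pqu0 : 0 < p + q * u by rewrite addr_gt0 ?mulr_gt0.
apply: eq_balanced (Hab k (p + q * u) (q * v) abk pqu0 (mulr_gt0 q0 v0) _).
  by move=> j; ring.
by rewrite -e; ring.
Qed.

Lemma card_opposite_combl a b k u v : 0 < u -> 0 < v ->
  opposite (a k) (b k) -> u * a k + v * b k = 0 ->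
  (#|[pred j | opposite (a j) (u * a j + v * b j)]|
    < #|[pred j | opposite (a j) (b j)]|)%N.
Proof.
move=> u0 v0 abk e; apply/proper_card/properP; split.
  by apply/subsetP => j; rewrite !inE; apply: opposite_combl.
by exists k; rewrite !inE // e /opposite ltxx !andbF.
Qed.

Lemma balanced_cone a b : balanced a -> balanced b -> crossings_balanced a b ->
  forall p q, 0 < p -> 0 < q -> balanced (fun j => p * a j + q * b j).
Proof.
have [N] := ubnP #|[pred j | opposite (a j) (b j)]|.
elim: N a b => // N IH a b ltN Ba Bb Hab p q p0 q0.
have [/existsP[k abk] | /existsPn no_opp] := boolP [exists k, opposite (a k) (b k)];
  last exact: balanced_comb.
wlog le_qp : a b p q ltN Ba Bb Hab p0 q0 abk / q * `|b k| <= p * `|a k|.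
  move=> side; have [|/ltW le_pq] := leP (q * `|b k|) (p * `|a k|); first exact: side.
  apply: eq_balanced (side b a q p _ Bb Ba _ q0 p0 _ le_pq) => [j|||].
  - by rewrite addrC.
  - rewrite (eq_card (B := [pred j | opposite (a j) (b j)])) // => j.
    by rewrite !inE oppositeC.
  - exact: crossings_balancedC.
  - by rewrite oppositeC.
have [v0 u0] := opposite_norm_gt0 abk.
set u := `|b k| in le_qp u0; set v := `|a k| in le_qp v0.
pose m j := u * a j + v * b j.
have Bm : balanced m := Hab k u v abk u0 v0 (opposite_norm_comb abk).
move: le_qp; rewrite le_eqVlt => /orP[/eqP eq_qp | lt_qp].
  have -> : q = p * v / u by rewrite -eq_qp mulfK ?gt_eqF.
  apply: eq_balanced (balancedZ (divr_gt0 p0 u0) Bm) => j.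
  by rewrite /m; field; rewrite gt_eqF.
have p'0 : 0 < p - q * u / v by rewrite subr_gt0 ltr_pdivrMr.
apply: eq_balanced (IH a m _ Ba Bm _ _ _ p'0 (divr_gt0 q0 v0)) => [j||].
- by rewrite /m; field; rewrite gt_eqF.
- exact: leq_trans (card_opposite_combl u0 v0 abk (opposite_norm_comb abk)) ltN.
- exact: crossings_balanced_combl.
Qed.

End Balanced.

Lemma dotzD (R : realDomainType) s0 (t1 t2 : 'I_s0 -> R) c1 c2 z :
  dotz (fun i => c1 * t1 i + c2 * t2 i) z = c1 * dotz t1 z + c2 * dotz t2 z.
Proof.
rewrite /dotz !mulr_sumr -big_split /=; apply: eq_bigr => i _.
by rewrite mulrDl !mulrA.
Qed.

Lemma dotzB (R : realDomainType) s0 (t1 t2 : 'I_s0 -> R) c z :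
  dotz (fun i => t1 i - c * t2 i) z = dotz t1 z - c * dotz t2 z.
Proof.
rewrite /dotz mulr_sumr -sumrB; apply: eq_bigr => i _.
by rewrite mulrBl mulrA.
Qed.

Theorem lemma3p10 (R : realFieldType) (s0 r0 : nat)
  (nu nu' : 'I_r0 -> 'I_s0 -> nat) (alpha : 'I_s0 -> R) (beta : 'I_r0 -> R)
  (theta1 theta2 : 'I_s0 -> R) :
  (1 <= s0)%N -> (1 <= r0)%N ->
  (forall i, 0 <= alpha i) ->
  (forall i, 0 <= theta1 i) -> (forall i, 0 <= theta2 i) ->
  balance alpha beta nu nu' theta1 ->
  balance alpha beta nu nu' theta2 ->
  (forall k : 'I_r0,
     ((k \in Gamma_plus nu nu' theta1) && (k \in Gamma_minus nu nu' theta2))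
     || ((k \in Gamma_minus nu nu' theta1) && (k \in Gamma_plus nu nu' theta2)) ->
     balance alpha beta nu nu'
       (fun i => theta1 i
          - (dotz theta1 (zeta nu nu' k) / dotz theta2 (zeta nu nu' k)) * theta2 i)) ->
  forall c1 c2 : R, 0 < c1 -> 0 < c2 ->
    balance alpha beta nu nu' (fun i => c1 * theta1 i + c2 * theta2 i).
Proof.
(* Only the signs of theta . zeta_k matter. *)
move=> _ _ _ _ _ B1 B2 Bcross c1 c2 c10 c20.
pose a k := dotz theta1 (zeta nu nu' k).
pose b k := dotz theta2 (zeta nu nu' k).
have Hab : crossings_balanced (rho alpha beta nu) a b.
  move=> k p q abk p0 _ e.
  have bk0 : b k != 0 by rewrite -normr_gt0; case: (opposite_norm_gt0 abk).
  have -> : q = - (p * (a k / b k)).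
    move/eqP: e; rewrite addrC addr_eq0 => /eqP qb.
    by rewrite -[q](mulfK bk0) qb mulNr mulrA.
  apply: eq_balanced (balancedZ p0 (Bcross k abk)) => j.
  by rewrite dotzB /a /b; ring.
apply: eq_balanced (balanced_cone B1 B2 Hab c10 c20) => j.
by rewrite dotzD.
Qed.
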